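(* Let $\mathcal{K}$ be a convex cone in $\mathbb{R}^d$ and $F$ a Legendre function with domain $\mathcal{K}$. Let $\Pi^\dagger_{\mathrm{all}}=\mathcal{K}^{\mathcal{X}}$ and $\pi_0\in\Pi^\dagger_{\mathrm{all}}$. Suppose that for any $p,q\in\mathcal{K}$ and weights $\lambda_1,\lambda_2>0$, the point $c^*$ defined by $\nabla F(c^* )=\frac{\lambda_1\nabla F(p)+\lambda_2\nabla F(q)}{\lambda_1+\lambda_2}$ lies in $\mathcal{K}$. Then the minimizer $\overline\pi$ of $\pi\mapsto\mathbb{E}_{x\sim\mathcal{D}_{\mathcal{X}}}[\mathsf{B}_F(\pi(x)\parallel\pi_0(x))]$ over the linear subspace $\mathcal{C}^{\dagger\dagger}_{\mathrm{coh}}$ lies in $\mathcal{C}^\dagger_{\mathrm{coh}}=\mathcal{C}^{\dagger\dagger}_{\mathrm{coh}}\cap\Pi^\dagger_{\mathrm{all}}$.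
   Context: $\mathcal{X}$ finite; $\mathcal{D}_{\mathcal{X}}$ a full-support distribution on $\mathcal{X}$; $\Phi\colon\mathcal{X}\to\mathcal{X}$ an involution; $\mathcal{C}^{\dagger\dagger}_{\mathrm{coh}}=\{\pi\colon\mathcal{X}\to\mathbb{R}^d:\pi(x)=\pi(\Phi(x))\ \forall x\}$. $\mathsf{B}_F(p\parallel q)=F(p)-F(q)-\langle\nabla F(q),p-q\rangle$. A Legendre function is proper, closed, convex, differentiable on the interior $\Omega$ of its domain, with $\nabla F\colon\Omega\to\mathrm{int}(\mathrm{dom}F^* )$ a bijection. *)

From HB Require Import structures.
From mathcomp Require Import all_boot all_order all_algebra.
From mathcomp Require Import all_classical all_reals all_analysis.
Set Implicit Arguments. Unset Strict Implicit. Unset Printing Implicit Defensive.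
Import Order.TTheory GRing.Theory Num.Theory.
Import numFieldNormedType.Exports.
Local Open Scope classical_set_scope.
Local Open Scope ring_scope.

Section Defs.
Variables (R : realType) (d : nat).
Notation V := 'rV[R]_d.

Definition inner (p q : V) : R := \sum_(i < d) p 0 i * q 0 i.

Definition convex_cone (K : set V) : Prop :=
  (forall x y, K x -> K y -> K (x + y)) /\
  (forall x (t : R), K x -> 0 < t -> K (t *: x)).

Definition edom (F : V -> \bar R) : set V := [set x | (F x < +oo)%E].

Definition proper_fun (F : V -> \bar R) : Prop :=
  (exists x, (F x < +oo)%E) /\ (forall x, (-oo < F x)%E).

Definition convex_efun (F : V -> \bar R) : Prop :=
  forall (x y : V) (t : R), 0 < t < 1 ->
    (F ((1 - t) *: x + t *: y)%R <= (1 - t)%:E * F x + t%:E * F y)%E.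

(* closed = lower semicontinuous = all sublevel sets closed *)
Definition closed_efun (F : V -> \bar R) : Prop :=
  forall a : R, closed [set x | (F x <= a%:E)%E].

Definition grad (F : V -> \bar R) (x : V) : V :=
  \row_(i < d) ('d (fine \o F) x : V -> R) (delta_mx 0 i).

Definition conj_fun (F : V -> \bar R) (y : V) : \bar R :=
  ereal_sup [set ((inner x y)%:E - F x)%E | x in [set: V]].

Definition Legendre (F : V -> \bar R) : Prop :=
  proper_fun F /\ convex_efun F /\ closed_efun F /\
      (forall x, interior (edom F) x -> differentiable (fine \o F) x) /\
      (forall x, interior (edom F) x -> interior (edom (conj_fun F)) (grad F x)) /\
      (forall x y, interior (edom F) x -> interior (edom F) y ->
          grad F x = grad F y -> x = y) /\
      (forall y, interior (edom (conj_fun F)) y ->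
          exists2 x, interior (edom F) x & grad F x = y).

Definition bregman (F : V -> \bar R) (p q : V) : \bar R :=
  (F p - F q - (inner (grad F q) (p - q)%R)%:E)%E.

End Defs.

From HB Require Import structures.
From mathcomp Require Import all_boot all_order all_algebra.
From mathcomp Require Import all_classical all_reals all_analysis.
From mathcomp Require Import ring lra.
Set Implicit Arguments.
Unset Strict Implicit.
Unset Printing Implicit Defensive.
Import Order.TTheory GRing.Theory Num.Theory.
Import numFieldNormedType.Exports.
Local Open Scope classical_set_scope.
Local Open Scope ring_scope.

(** The objective splits into independent terms over the orbits {x, Phi x}.
  On an orbit, the candidate value c is the "mirror average" of the two
  anchors: grad F c = (D x grad F (pi0 x) + D (Phi x) grad F (pi0 (Phi x))) /
  (D x + D (Phi x)).  It exists because dom F* is convex and grad F is a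
  bijection from int dom F onto int dom F*, and it is the same for x and
  Phi x because grad F is injective.  The three-point identity
    a (B(p||q1) - B(c||q1)) + b (B(p||q2) - B(c||q2)) = (a + b) B(p||c) >= 0
  shows that c is optimal on every orbit.  Finally, a minimizer has finite
  objective, so all its values lie in dom F = K. *)

Section InnerProduct.
Variables (R : realType) (d : nat).
Implicit Types u v w : 'rV[R]_d.

Lemma innerDl u v w : inner (u + v) w = inner u w + inner v w.
Proof.
by rewrite /inner -big_split; apply: eq_bigr => i _; rewrite mxE mulrDl.
Qed.

Lemma innerZl (a : R) u w : inner (a *: u) w = a * inner u w.
Proof.
by rewrite /inner mulr_sumr; apply: eq_bigr => i _; rewrite mxE mulrA.
Qed.

Lemma innerDr u v w : inner u (v + w) = inner u v + inner u w.
Proof.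
by rewrite /inner -big_split; apply: eq_bigr => i _; rewrite mxE mulrDr.
Qed.

Lemma innerZr (a : R) u w : inner u (a *: w) = a * inner u w.
Proof.
by rewrite /inner mulr_sumr; apply: eq_bigr => i _; rewrite mxE mulrCA.
Qed.

Lemma innerBr u v w : inner u (v - w) = inner u v - inner u w.
Proof.
by rewrite /inner -sumrB; apply: eq_bigr => i _; rewrite !mxE mulrBr.
Qed.

Lemma inner_grad (F : 'rV[R]_d -> \bar R) c v :
  inner (grad F c) v = 'd (fine \o F) c v.
Proof.
rewrite [in RHS](row_sum_delta v) linear_sum /inner; apply: eq_bigr => i _.
by rewrite linearZ mxE mulrC.
Qed.

End InnerProduct.

Lemma interior_convex_comb (K : realFieldType) (V : normedModType K)
    (S : set V) (t : K) (a b : V) :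
  (forall u v, S u -> S v -> S ((1 - t) *: u + t *: v)) ->
  S° a -> S° b -> S° ((1 - t) *: a + t *: b).
Proof.
move=> S_comb /nbhs_ballP[ea ea_gt0 Sa] /nbhs_ballP[eb eb_gt0 Sb].
set z := (1 - t) *: a + t *: b.
apply/nbhs_ballP; exists (Num.min ea eb); first by rewrite /= lt_min ea_gt0.
move=> w; rewrite -ball_normE /= lt_min => /andP[w_ea w_eb].
have shiftE u : `|u - (u + (w - z))| = `|z - w|.
  by rewrite opprD addrA subrr sub0r normrN distrC.
have -> : w = (1 - t) *: (a + (w - z)) + t *: (b + (w - z)).
  rewrite [_ *: (a + _)]scalerDr [_ *: (b + _)]scalerDr addrACA -/z -scalerDl.
  by rewrite subrK scale1r addrC subrK.
by apply: S_comb; [apply: Sa | apply: Sb]; rewrite -ball_normE /= shiftE.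
Qed.

Lemma avg_convexE (K : fieldType) (V : lmodType K) (a b : K) (u v : V) :
  a + b != 0 ->
  (a + b)^-1 *: (a *: u + b *: v) = (1 - b / (a + b)) *: u + (b / (a + b)) *: v.
Proof.
by move=> ab_neq0; rewrite scalerDr !scalerA; congr (_ *: _ + _ *: _); field.
Qed.

Section ConvexConjugate.
Variables (R : realType) (d : nat) (F : 'rV[R]_d -> \bar R).
Hypothesis F_gtNy : forall v, (-oo < F v)%E.

Lemma conj_fun_ge x y : ((inner x y)%:E - F x <= conj_fun F y)%E.
Proof. by apply: ereal_sup_ubound; exists x. Qed.

Lemma edom_conj_fun_convex (a b : 'rV[R]_d) (t : R) : 0 <= t <= 1 ->
  edom (conj_fun F) a -> edom (conj_fun F) b ->
  edom (conj_fun F) ((1 - t) *: a + t *: b).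
Proof.
move=> /andP[t_ge0 t_le1].
have real_bound y : edom (conj_fun F) y -> exists r, (conj_fun F y <= r%:E)%E.
  rewrite /edom /=; case: (conj_fun F y) => [r _| // | _]; first by exists r.
  by exists 0; rewrite leNye.
move=> /real_bound[ra Ha] /real_bound[rb Hb]; rewrite /edom /=.
apply: (@le_lt_trans _ _ ((1 - t) * ra + t * rb)%:E); last exact: ltry.
apply: ge_ereal_sup => _ [x _ <-].
have := le_trans (conj_fun_ge x a) Ha; have := le_trans (conj_fun_ge x b) Hb.
move: (F_gtNy x); case: (F x) => [r _ | _ _ _ | //]; last first.
  by rewrite /= addeNy leNye.
rewrite -!EFinD !lee_fin innerDr !innerZr => xb xa.
have -> : (1 - t) * inner x a + t * inner x b - r =
          (1 - t) * (inner x a - r) + t * (inner x b - r) by ring.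
by rewrite lerD // ler_wpM2l // subr_ge0.
Qed.

End ConvexConjugate.

Section Bregman.
Variables (R : realType) (d : nat) (F : 'rV[R]_d -> \bar R).
Implicit Types p q c : 'rV[R]_d.

(* Only meaningful on edom F, since fine maps +oo to 0. *)
Definition bregmanR p q : R :=
  fine (F p) - fine (F q) - inner (grad F q) (p - q).

Lemma bregmanR_mirror_avg (a b : R) p c q1 q2 : a + b != 0 ->
  grad F c = (a + b)^-1 *: (a *: grad F q1 + b *: grad F q2) ->
  a * (bregmanR p q1 - bregmanR c q1) + b * (bregmanR p q2 - bregmanR c q2) =
  (a + b) * bregmanR p c.
Proof.
move=> ab_neq0 gradc; rewrite /bregmanR gradc.
move: (grad F q1) (grad F q2) => g1 g2.
rewrite !(innerBr, innerDl, innerZl).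
by field.
Qed.

Hypothesis F_gtNy : forall v, (-oo < F v)%E.

Lemma edom_fineK {p} : edom F p -> (fine (F p))%:E = F p.
Proof. by move=> Fp; apply/fineK/fin_real; rewrite F_gtNy. Qed.

Lemma bregmanE p q : edom F p -> edom F q -> bregman F p q = (bregmanR p q)%:E.
Proof. by move=> Fp Fq; rewrite /bregman -(edom_fineK Fp) -(edom_fineK Fq). Qed.

Lemma bregman_pinfty p q : F p = +oo%E -> edom F q -> bregman F p q = +oo%E.
Proof. by move=> Fp Fq; rewrite /bregman Fp -(edom_fineK Fq). Qed.

Lemma bregman_neqNy p q : edom F q -> bregman F p q != -oo%E.
Proof.
by move=> Fq; rewrite /bregman -(edom_fineK Fq); move: (F_gtNy p); case: (F p).
Qed.

Hypothesis F_convex : convex_efun F.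

Lemma bregmanR_ge0 p c : edom F p -> edom F c ->
  differentiable (fine \o F) c -> 0 <= bregmanR p c.
Proof.
move=> Fp Fc F_diff; rewrite subr_ge0 inner_grad -deriveE //.
have F_der : derivable (fine \o F) c (p - c) := diff_derivable F_diff.
apply: (cvgr_to_le (cvg_dnbhs_at_right F_der)); near=> h.
have h_gt0 : 0 < h by near: h; exact: nbhs_right_gt.
have h_lt1 : h < 1 by near: h; exact: nbhs_right_lt.
have := @F_convex c p h; rewrite h_gt0 h_lt1 => /(_ isT).
have -> : (1 - h) *: c + h *: p = h *: (p - c) + c.
  by rewrite scalerBr scalerBl scale1r addrAC [in RHS]addrC addrA.
rewrite -(edom_fineK Fp) -(edom_fineK Fc) -!EFinM -EFinD /= /shift.
move: (F_gtNy (h *: (p - c) + c)).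
case: (F (h *: (p - c) + c)) => [s _| //|//]; rewrite lee_fin => conv_h /=.
rewrite -[_ *: _]/(h^-1 * _) ler_pdivrMl //.
by move: conv_h; rewrite mulrBl mul1r; lra.
Unshelve. all: by end_near.
Qed.

End Bregman.

Lemma sumr_involution_ge0 (R : numDomainType) (X : finType) (Phi : X -> X)
    (h : X -> R) :
  involutive Phi -> (forall x, 0 <= h x + h (Phi x)) -> 0 <= \sum_x h x.
Proof.
move=> PhiK h_pair; rewrite -(pmulrn_lge0 _ (isT : (0 < 2)%N)) mulr2n.
rewrite {2}(reindex_inj (can_inj PhiK)) -big_split /=.
by apply: sumr_ge0 => x _; exact: h_pair.
Qed.

Section CoherentProjection.
Variables (R : realType) (d : nat) (X : finType) (D : X -> R) (Phi : X -> X).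
Variables (F : 'rV[R]_d -> \bar R) (pi0 : X -> 'rV[R]_d).
Hypotheses (D_gt0 : forall x, 0 < D x) (PhiK : involutive Phi).
Hypotheses (F_gtNy : forall v, (-oo < F v)%E) (F_convex : convex_efun F).
Hypothesis pi0_int : forall x, interior (edom F) (pi0 x).
Implicit Types pi c : X -> 'rV[R]_d.

Definition coherent pi := forall x, pi x = pi (Phi x).

Definition risk pi := (\sum_x (D x)%:E * bregman F (pi x) (pi0 x))%E.

Definition mirror_avg x : 'rV[R]_d :=
  (D x + D (Phi x))^-1 *:
    (D x *: grad F (pi0 x) + D (Phi x) *: grad F (pi0 (Phi x))).

Let pi0_edom x : edom F (pi0 x). Proof. exact: interior_subset. Qed.

Let D_pair_gt0 x : 0 < D x + D (Phi x). Proof. by rewrite addr_gt0. Qed.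

Lemma mirror_avgK x : mirror_avg (Phi x) = mirror_avg x.
Proof.
rewrite /mirror_avg PhiK.
move: (D x) (D (Phi x)) (grad F (pi0 x)) (grad F (pi0 (Phi x))) => a b u v.
by rewrite addrC [b *: _ + _]addrC.
Qed.

Lemma riskE pi : (forall x, edom F (pi x)) ->
  risk pi = (\sum_x D x * bregmanR F (pi x) (pi0 x))%:E.
Proof.
move=> pi_dom; rewrite /risk -sumEFin; apply: eq_bigr => x _.
by rewrite bregmanE.
Qed.

Lemma risk_pinfty pi x : F (pi x) = +oo%E -> risk pi = +oo%E.
Proof.
move=> Fpi; rewrite /risk (bigD1 x) //= bregman_pinfty // gt0_muley ?lte_fin //.
apply: addye; apply: (big_ind (fun y => y != -oo%E)) => //.
  by move=> y z; rewrite adde_eq_ninfty negb_or => -> ->.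
move=> y _; have := bregman_neqNy F_gtNy (pi y) (pi0_edom y).
by case: (bregman F (pi y) (pi0 y)) => // _; rewrite gt0_muley ?lte_fin.
Qed.

Lemma risk_lty_edom pi x : (risk pi < +oo)%E -> edom F (pi x).
Proof.
rewrite /edom /= !ltey; apply: contra => /eqP Fpi.
by rewrite (risk_pinfty Fpi).
Qed.

Lemma mirror_avg_int :
  (forall v, interior (edom F) v -> interior (edom (conj_fun F)) (grad F v)) ->
  forall x, interior (edom (conj_fun F)) (mirror_avg x).
Proof.
move=> grad_int x.
rewrite /mirror_avg (avg_convexE _ _ (lt0r_neq0 (D_pair_gt0 x))).
apply: interior_convex_comb; [|exact: grad_int|exact: grad_int].
move=> u v; apply: edom_conj_fun_convex => //.
have [Dx_gt0 DPx_gt0] := (D_gt0 x, D_gt0 (Phi x)).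
apply/andP; split; first by rewrite divr_ge0 ?ltW ?addr_gt0.
by rewrite ler_pdivrMr ?addr_gt0 // mul1r lerDr ltW.
Qed.

Lemma mirror_avg_min c :
  (forall x, edom F (c x)) -> (forall x, differentiable (fine \o F) (c x)) ->
  coherent c -> (forall x, grad F (c x) = mirror_avg x) ->
  forall pi, coherent pi -> (risk c <= risk pi)%E.
Proof.
move=> c_dom c_diff c_coh c_grad pi pi_coh.
have [pi_dom|] := pselect (forall x, edom F (pi x)); last first.
  move=> /existsNP[x /negP]; rewrite /edom /= ltey negbK => /eqP Fpi.
  by rewrite (risk_pinfty Fpi) leey.
rewrite !riskE // lee_fin -subr_ge0 -sumrB.
apply: sumr_involution_ge0 PhiK _ => x.
rewrite -!mulrBr -(c_coh x) -(pi_coh x).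
rewrite (bregmanR_mirror_avg (pi x) (lt0r_neq0 (D_pair_gt0 x)) (c_grad x)).
apply: mulr_ge0; first exact/ltW/D_pair_gt0.
exact: (bregmanR_ge0 F_gtNy F_convex (pi_dom x) (c_dom x) (c_diff x)).
Qed.

End CoherentProjection.

Theorem theorem12 (R : realType) (d : nat) (X : finType)
  (D : X -> R) (Phi : X -> X)
  (K : set 'rV[R]_d) (F : 'rV[R]_d -> \bar R) (pi0 : X -> 'rV[R]_d) :
  (forall x, 0 < D x) -> \sum_(x : X) D x = 1 ->
  (forall x, Phi (Phi x) = x) ->
  convex_cone K -> Legendre F -> edom F = K ->
  (forall x, K (pi0 x)) ->
  (forall x, interior (edom F) (pi0 x)) ->
  (forall (p q : 'rV[R]_d) (l1 l2 : R), K p -> K q -> 0 < l1 -> 0 < l2 ->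
     forall c, interior (edom F) c ->
       grad F c = (l1 + l2)^-1 *: (l1 *: grad F p + l2 *: grad F q) -> K c) ->
  let Ccoh2 := [set pi : X -> 'rV[R]_d | forall x, pi x = pi (Phi x)] in
  let Pall := [set pi : X -> 'rV[R]_d | forall x, K (pi x)] in
  let J := fun pi : X -> 'rV[R]_d =>
     (\sum_(x : X) (D x)%:E * bregman F (pi x) (pi0 x))%E in
  let is_min := fun pib => Ccoh2 pib /\ forall pi, Ccoh2 pi -> (J pib <= J pi)%E in
  (exists pib, is_min pib) /\
  (forall pib, is_min pib -> (Ccoh2 `&` Pall) pib).
Proof.
move=> D_gt0 _ PhiK _ [[_ F_gtNy] [F_convex [_ [F_diff [grad_int grad_bij]]]]].
case: grad_bij => grad_inj grad_surj edomK _ pi0_int _ Ccoh2 Pall J is_min.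
have /all_sig2[c c_int c_grad] :
    forall x, {c | interior (edom F) c & grad F c = mirror_avg D Phi F pi0 x}.
  by move=> x; apply/cid2/grad_surj/mirror_avg_int.
have c_dom x : edom F (c x) := interior_subset (c_int x).
have c_coh : coherent Phi c.
  move=> x; apply: grad_inj; [exact: c_int | exact: c_int |].
  by rewrite !c_grad mirror_avgK.
have c_min := mirror_avg_min D_gt0 PhiK F_gtNy F_convex pi0_int c_dom
  (fun x => F_diff _ (c_int x)) c_coh c_grad.
have c_risk_fin : (risk D F pi0 c < +oo)%E.
  by rewrite (riskE D F_gtNy pi0_int c_dom) ltry.
split.
  by exists c; split; [exact: c_coh | exact: c_min].
move=> pib [pib_coh pib_min]; split; first exact: pib_coh.
move=> x; rewrite -edomK; apply: (risk_lty_edom D_gt0 F_gtNy pi0_int).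
exact: le_lt_trans (pib_min c c_coh) c_risk_fin.
Qed.
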